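(* For every integer $k\ge 2$, there exists a connected twin-free graph $G$ with $n=2^{k-1}+k-2$ vertices for which $i_{\max}(G)=k$.
   Context: $i_{\max}(G)$ denotes the number of maximal independent sets of $G$. A graph is twin-free if no two vertices have the same open neighbourhood. *)

From mathcomp Require Import all_boot.
Set Implicit Arguments. Unset Strict Implicit. Unset Printing Implicit Defensive.

Section Graphs.
Variable T : finType.

Definition simple_graph (e : rel T) : Prop := symmetric e /\ irreflexive e.

Definition connected_graph (e : rel T) : Prop := forall x y : T, connect e x y.

Definition open_nbhd (e : rel T) (x : T) : {set T} := [set y | e x y].

Definition twin_free (e : rel T) : Prop :=
  forall x y : T, open_nbhd e x = open_nbhd e y -> x = y.

Definition independent (e : rel T) (A : {set T}) : bool :=
  [forall x in A, forall y in A, ~~ e x y].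

Definition maximal_independent (e : rel T) (A : {set T}) : bool :=
  independent e A && [forall x, (x \notin A) ==> ~~ independent e (x |: A)].

Definition imax (e : rel T) : nat := #|[set A : {set T} | maximal_independent e A]|.
End Graphs.

(** Idea: for [n = k - 1] take as vertices the proper subsets [S] of
   [{0, ..., n-1}] together with the points [i] of [{0, ..., n-1}], where the
   points form a clique, the subsets form an independent set, and a point [i]
   is adjacent to a subset [S] iff [i \notin S].  A maximal independent set
   contains at most one point: with no point it consists of all the subsets,
   with the point [i] it is [i] together with the subsets containing [i].
   Hence there are [n + 1 = k] of them.  The empty subset is adjacent to every
   point and every proper subset misses some point, so the graph is connected;
   the neighbourhoods of points and subsets are told apart by the points and
   by the empty subset, so it is twin-free. *)
From mathcomp Require Import all_boot.
From mathcomp Require Import zify.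
Set Implicit Arguments. Unset Strict Implicit. Unset Printing Implicit Defensive.

Section Independence.
Variables (T : finType) (e : rel T).
Implicit Types (A B : {set T}).

Lemma independentP A :
  reflect {in A &, forall x y, ~~ e x y} (independent e A).
Proof.
apply: (iffP forall_inP) => [indA x y xA yA | indA x xA].
  by have /forall_inP := indA x xA; apply.
by apply/forall_inP => y yA; apply: indA.
Qed.

Lemma maximal_independentP A :
  reflect (independent e A /\ forall x, x \notin A -> ~~ independent e (x |: A))
          (maximal_independent e A).
Proof.
apply: (iffP andP) => [[indA /forallP maxA] | [indA maxA]]; split => //.
  by move=> x; apply/implyP.
by apply/forallP => x; apply/implyP/maxA.
Qed.

Lemma edge_not_independent A x y :
  x \in A -> y \in A -> e x y -> ~~ independent e A.
Proof. by move=> xA yA exy; apply/independentP => /(_ x y xA yA); rewrite exy. Qed.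

Lemma maximal_independent_subset_eq A B :
  maximal_independent e A -> independent e B -> A \subset B -> A = B.
Proof.
move=> /maximal_independentP[_ maxA] /independentP indB sAB.
apply/eqP; rewrite eqEsubset sAB; apply/subsetP => x xB.
apply/negPn/negP => /maxA/independentP; apply => y z.
by rewrite !inE => /predU1P[-> | /(subsetP sAB) yB] /predU1P[-> | /(subsetP sAB) zB];
  apply: indB.
Qed.

End Independence.

Section Relabelling.
Variables (U W : finType) (e : rel W) (h : U -> W) (g : W -> U).
Hypotheses (hK : cancel h g) (gK : cancel g h).

Lemma simple_graph_relpre : simple_graph e -> simple_graph (relpre h e).
Proof. by case=> e_sym e_irr; split => [x y | x] /=; [apply: e_sym | apply: e_irr]. Qed.

Lemma connect_relpre a b : connect e a b -> connect (relpre h e) (g a) (g b).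
Proof.
case/connectP => p; elim: p a => [|c p IHp] a /=; first by move=> _ ->.
case/andP => eac pc lastc; apply: connect_trans (IHp c pc lastc).
by apply: connect1; rewrite /= !gK.
Qed.

Lemma connected_graph_relpre : connected_graph e -> connected_graph (relpre h e).
Proof. by move=> e_conn x y; rewrite -(hK x) -(hK y); apply: connect_relpre. Qed.

Lemma twin_free_relpre : twin_free e -> twin_free (relpre h e).
Proof.
move=> e_twin x y /setP Nxy; apply: (can_inj hK); apply: e_twin; apply/setP => v.
by have := Nxy (g v); rewrite !inE /= gK.
Qed.

Lemma independent_relpre A : independent (relpre h e) A = independent e (h @: A).
Proof.
apply/independentP/independentP => indA.
  by move=> _ _ /imsetP[x xA ->] /imsetP[y yA ->]; apply: indA.
by move=> x y xA yA; apply: indA; apply: imset_f.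
Qed.

Lemma maximal_independent_relpre A :
  maximal_independent (relpre h e) A = maximal_independent e (h @: A).
Proof.
apply/maximal_independentP/maximal_independentP => [[indA maxA] | [indA maxA]].
  split; first by rewrite -independent_relpre.
  move=> v vA; rewrite -(gK v) -imsetU1 -independent_relpre; apply: maxA.
  by apply: contra vA => gvA; rewrite -(gK v) imset_f.
split; first by rewrite independent_relpre.
move=> x xA; rewrite independent_relpre imsetU1; apply: maxA.
by apply: contra xA => /imsetP[y yA /(can_inj hK) ->].
Qed.

Lemma imax_relpre : imax (relpre h e) = imax e.
Proof.
have imsetK : cancel (fun A : {set U} => h @: A) (fun B => g @: B).
  by move=> A; rewrite -imset_comp (eq_imset _ hK) imset_id.
have imsetVK : cancel (fun B : {set W} => g @: B) (fun A => h @: A).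
  by move=> B; rewrite -imset_comp (eq_imset _ gK) imset_id.
rewrite /imax -(on_card_preimset (onW_bij _ (Bijective imsetK imsetVK))).
by apply: eq_card => A; rewrite !inE maximal_independent_relpre.
Qed.

End Relabelling.

Lemma relabel_ordinal (V : finType) (N : nat) (e : rel V) :
  #|V| = N -> simple_graph e -> connected_graph e -> twin_free e ->
  exists e' : rel 'I_N,
    [/\ simple_graph e', connected_graph e', twin_free e' & imax e' = imax e].
Proof.
move=> cardV e_simple e_conn e_twin.
pose h (x : 'I_N) := enum_val (cast_ord (esym cardV) x).
pose g (v : V) := cast_ord cardV (enum_rank v).
have hK : cancel h g by move=> x; rewrite /g /h enum_valK cast_ordKV.
have gK : cancel g h by move=> v; rewrite /g /h cast_ordK enum_rankK.
exists (relpre h e); split.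
- exact: simple_graph_relpre.
- exact: connected_graph_relpre gK e_conn.
- exact: twin_free_relpre hK gK e_twin.
- exact: imax_relpre hK gK.
Qed.

Section NonmemberGraph.
Variable m : nat.
Local Notation n := m.+1.
Local Notation proper_set := {X : {set 'I_n} | X != setT}.
Local Notation vertex := (proper_set + 'I_n)%type.

Definition nonmember_graph (x y : vertex) : bool :=
  match x, y with
  | inl _, inl _ => false
  | inl X, inr i | inr i, inl X => i \notin val X
  | inr i, inr j => i != j
  end.

Lemma card_nonmember_vertex : #|{: vertex}| = 2 ^ n + m.
Proof.
rewrite card_sum card_sig card_ord.
have -> : #|[pred X : {set 'I_n} | X != setT]| = #|{set 'I_n}|.-1.
  by rewrite -(cardC1 setT); apply: eq_card.
rewrite -cardsT -powersetT card_powerset cardsT card_ord.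
have : 0 < 2 ^ n by rewrite expn_gt0.
lia.
Qed.

Lemma set0_neqT : set0 != [set: 'I_n].
Proof. by apply/eqP => /setP/(_ ord0); rewrite !inE. Qed.

Definition empty_proper_set : proper_set := exist _ set0 set0_neqT.

Lemma proper_set_notin (X : proper_set) : exists i, i \notin val X.
Proof.
have : ~~ ([set: 'I_n] \subset val X) by rewrite subTset (valP X).
by case/subsetPn => i _; exists i.
Qed.

Lemma nonmember_graph_simple : simple_graph nonmember_graph.
Proof. by split => [[X|i] [Y|j] | [X|i]] //=; rewrite ?eqxx // eq_sym. Qed.

Lemma nonmember_graph_connected : connected_graph nonmember_graph.
Proof.
have to_empty v : connect nonmember_graph v (inl empty_proper_set).
  case: v => [X | i]; last by apply: connect1; rewrite /= inE.
  have [i iX] := proper_set_notin X.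
  by apply: (@connect_trans _ _ (inr i)); apply: connect1; rewrite //= inE.
move=> x y; apply: connect_trans (to_empty x) _.
by rewrite (sym_connect_sym (proj1 nonmember_graph_simple)); apply: to_empty.
Qed.

Lemma nonmember_graph_twin_free : twin_free nonmember_graph.
Proof.
move=> x y /setP Nxy.
have {}Nxy z : nonmember_graph x z = nonmember_graph y z.
  by have := Nxy z; rewrite !inE.
case: x y Nxy => [X | i] [Y | j] Nxy.
- congr inl; apply: val_inj; apply/setP => i.
  by apply: negb_inj; apply: (Nxy (inr i)).
- by have := Nxy (inl empty_proper_set); rewrite /= inE.
- by have := Nxy (inl empty_proper_set); rewrite /= inE.
- by have := Nxy (inr j); rewrite /= eqxx => /negbFE/eqP ->.
Qed.

Definition nonmember_mis (o : option 'I_n) : {set vertex} :=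
  match o with
  | None => [set x : vertex | if x is inl _ then true else false]
  | Some i => [set x : vertex | match x with inl X => i \in val X | inr j => j == i end]
  end.

Lemma nonmember_mis_independent o : independent nonmember_graph (nonmember_mis o).
Proof.
apply/independentP => x y.
case: o => [i|]; rewrite !inE; case: x => [X|j]; case: y => [Y|l] //=.
- by move=> iX /eqP ->; rewrite iX.
- by move=> /eqP -> iY; rewrite iY.
- by move=> /eqP -> /eqP ->; rewrite eqxx.
Qed.

Lemma nonmember_mis_maximal o : maximal_independent nonmember_graph (nonmember_mis o).
Proof.
apply/maximal_independentP; split; first exact: nonmember_mis_independent.
case: o => [i|] [X | j]; rewrite inE //= => xNmis.
- apply: (@edge_not_independent _ _ _ (inl X) (inr i));
    by rewrite ?inE ?eqxx /= ?inE ?orbT.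
- apply: (@edge_not_independent _ _ _ (inr j) (inr i));
    by rewrite ?inE ?eqxx /= ?inE ?orbT.
- apply: (@edge_not_independent _ _ _ (inr j) (inl empty_proper_set));
    by rewrite ?inE ?eqxx /= ?inE ?orbT.
Qed.

Lemma maximal_independent_nonmember A :
  maximal_independent nonmember_graph A -> exists o, A = nonmember_mis o.
Proof.
move=> maxA; have /maximal_independentP[/independentP indA _] := maxA.
have [i iA | noPoint] := pickP [pred i | inr i \in A].
  exists (Some i); apply: maximal_independent_subset_eq maxA _ _.
    exact: nonmember_mis_independent.
  apply/subsetP => y yA; rewrite inE.
  by case: y yA => [X | j] yA; have := indA _ _ iA yA; rewrite /= negbK // eq_sym.
exists None; apply: maximal_independent_subset_eq maxA _ _.
  exact: nonmember_mis_independent.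
by apply/subsetP => [[X | j]] jA; rewrite inE //; have := noPoint j; rewrite /= jA.
Qed.

Lemma nonmember_mis_inj : injective nonmember_mis.
Proof.
move=> [i|] [j|] /setP eq_mis //.
- by have := eq_mis (inr i); rewrite !inE eqxx => /esym/eqP ->.
- by have := eq_mis (inr i); rewrite !inE eqxx.
- by have := eq_mis (inr j); rewrite !inE eqxx.
Qed.

Lemma imax_nonmember_graph : imax nonmember_graph = n.+1.
Proof.
rewrite /imax.
have -> : [set A | maximal_independent nonmember_graph A] = nonmember_mis @: setT.
  apply/setP => A; rewrite inE; apply/idP/imsetP => [/maximal_independent_nonmember|].
    by case=> o ->; exists o.
  by case=> o _ ->; apply: nonmember_mis_maximal.
by rewrite card_imset ?cardsT ?card_option ?card_ord //; apply: nonmember_mis_inj.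
Qed.

End NonmemberGraph.

Theorem proposition2p1 (k : nat) (hk : 2 <= k) :
  exists e : rel 'I_(2 ^ (k - 1) + k - 2),
    [/\ simple_graph e, connected_graph e, twin_free e & imax e = k].
Proof.
case: k hk => [|[|m]] // _.
have card_vertex : #|{: ({X : {set 'I_m.+1} | X != setT} + 'I_m.+1)%type}|
                   = 2 ^ (m.+2 - 1) + m.+2 - 2.
  by rewrite card_nonmember_vertex subSS subn0; lia.
have := relabel_ordinal card_vertex (@nonmember_graph_simple m)
  (@nonmember_graph_connected m) (@nonmember_graph_twin_free m).
by rewrite imax_nonmember_graph.
Qed.
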